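(* Let $A,B$ be non-empty sets, $I$ a non-empty index set, $\{V_i\}_{i\in I}\subseteq\mathcal R(A)$, $\{W_i\}_{i\in I}\subseteq\mathcal R(B)$, and let $\phi^{(1)},\dots,\phi^{(6)}:\mathcal R(A,B)\to\mathcal R(A,B)$ be defined by $\phi^{(1)}(R)=\bigwedge_{i\in I}[(W_i\circ R^{-1})\backslash V_i]^{-1}$, $\phi^{(2)}(R)=\bigwedge_{i\in I}(R\circ W_i)/V_i$, $\phi^{(3)}(R)=\bigwedge_{i\in I}[(W_i\circ R^{-1})\backslash V_i]^{-1}\wedge[(V_i\circ R)\backslash W_i]$, $\phi^{(4)}(R)=\bigwedge_{i\in I}[(R\circ W_i)/V_i]\wedge[(R^{-1}\circ V_i)/W_i]^{-1}$, $\phi^{(5)}(R)=\bigwedge_{i\in I}[(R\circ W_i)/V_i]\wedge[(V_i\circ R)\backslash W_i]$, $\phi^{(6)}(R)=\bigwedge_{i\in I}[(W_i\circ R^{-1})\backslash V_i]^{-1}\wedge[(R^{-1}\circ V_i)/W_i]^{-1}$. Then each $\phi^{(t)}$, $t\in\{1,\dots,6\}$, is isotone, and if $A$, $B$ and $I$ are finite, then each $\phi^{(t)}$ is image-localized.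
   Context: $\mathcal L=(L,\wedge,\vee,\otimes,\to,0,1)$ is a complete residuated lattice. For non-empty sets $X,Y$, $\mathcal R(X,Y)$ is the set of fuzzy relations $X\times Y\to L$, $\mathcal R(X)=\mathcal R(X,X)$, ordered pointwise with pointwise meets; $R^{-1}(y,x)=R(x,y)$; $(R\circ S)(x,t)=\bigvee_{y}R(x,y)\otimes S(y,t)$. Residuals: for $S\in\mathcal R(X,Y)$, $T\in\mathcal R(X)$, $T'\in\mathcal R(Y)$: $(S/T)(x,y)=\bigwedge_{x'\in X}(T(x',x)\to S(x',y))$ and $(S\backslash T')(x,y)=\bigwedge_{y'\in Y}(T'(y,y')\to S(x,y'))$. A map $\phi:\mathcal R(A,B)\to\mathcal R(A,B)$ is isotone if $R\le S$ implies $\phi(R)\le\phi(S)$. It is image-localized if there is a finite $K\subseteq L$ such that for every $R\in\mathcal R(A,B)$, $\mathrm{im}(\phi(R))\subseteq\langle K\cup\mathrm{im}(R)\rangle$, where $\mathrm{im}$ denotes the set of values and $\langle M\rangle$ is the subalgebra of $(L,\wedge,\vee,\otimes,\to,0,1)$ generated by $M$. *)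

From Stdlib Require Import List.
Import ListNotations.
Set Implicit Arguments.

Record CRL := {
  car :> Type;
  le : car -> car -> Prop;
  meet : car -> car -> car;
  join : car -> car -> car;
  otimes : car -> car -> car;
  impl : car -> car -> car;
  bot : car;
  top : car;
  inf : (car -> Prop) -> car;
  sup : (car -> Prop) -> car;
  le_refl : forall a, le a a;
  le_trans : forall a b c, le a b -> le b c -> le a c;
  le_antisym : forall a b, le a b -> le b a -> a = b;
  meet_glb : forall a b c, le c (meet a b) <-> (le c a /\ le c b);
  join_lub : forall a b c, le (join a b) c <-> (le a c /\ le b c);
  bot_least : forall a, le bot a;
  top_greatest : forall a, le a top;
  inf_lb : forall (S : car -> Prop) a, S a -> le (inf S) a;
  inf_glb : forall (S : car -> Prop) c, (forall a, S a -> le c a) -> le c (inf S);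
  sup_ub : forall (S : car -> Prop) a, S a -> le a (sup S);
  sup_lub : forall (S : car -> Prop) c, (forall a, S a -> le a c) -> le (sup S) c;
  otimes_comm : forall a b, otimes a b = otimes b a;
  otimes_assoc : forall a b c, otimes a (otimes b c) = otimes (otimes a b) c;
  otimes_top : forall a, otimes a top = a;
  adjoint : forall a b c, le (otimes a b) c <-> le a (impl b c)
}.

Section Rel.
Variable L : CRL.

Definition infi {T : Type} (f : T -> L) : L := inf L (fun a => exists t, a = f t).
Definition supi {T : Type} (f : T -> L) : L := sup L (fun a => exists t, a = f t).

Definition frel (X Y : Type) := X -> Y -> L.

Definition rle {X Y : Type} (R S : frel X Y) : Prop :=
  forall x y, le L (R x y) (S x y).

Definition rinv {X Y : Type} (R : frel X Y) : frel Y X := fun y x => R x y.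

Definition rcomp {X Y Z : Type} (R : frel X Y) (S : frel Y Z) : frel X Z :=
  fun x t => supi (fun y => otimes L (R x y) (S y t)).

Definition rmeet {X Y : Type} (R S : frel X Y) : frel X Y :=
  fun x y => meet L (R x y) (S x y).

Definition rinfi {I X Y : Type} (F : I -> frel X Y) : frel X Y :=
  fun x y => infi (fun i => F i x y).

(** right residual S/T, with S in R(X,Y), T in R(X) *)
Definition rdiv {X Y : Type} (S : frel X Y) (T : frel X X) : frel X Y :=
  fun x y => infi (fun x' => impl L (T x' x) (S x' y)).

(** left residual S\T', with S in R(X,Y), T' in R(Y) *)
Definition ldiv {X Y : Type} (S : frel X Y) (T' : frel Y Y) : frel X Y :=
  fun x y => infi (fun y' => impl L (T' y y') (S x y')).

Definition isotone {A B : Type} (phi : frel A B -> frel A B) : Prop :=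
  forall R S, rle R S -> rle (phi R) (phi S).

Inductive gen (M : L -> Prop) : L -> Prop :=
  | gen_base : forall a, M a -> gen M a
  | gen_bot : gen M (bot L)
  | gen_top : gen M (top L)
  | gen_meet : forall a b, gen M a -> gen M b -> gen M (meet L a b)
  | gen_join : forall a b, gen M a -> gen M b -> gen M (join L a b)
  | gen_otimes : forall a b, gen M a -> gen M b -> gen M (otimes L a b)
  | gen_impl : forall a b, gen M a -> gen M b -> gen M (impl L a b).

Definition im {X Y : Type} (R : frel X Y) : L -> Prop :=
  fun a => exists x y, a = R x y.

Definition image_localized {A B : Type} (phi : frel A B -> frel A B) : Prop :=
  exists K : list L, forall R a, im (phi R) a ->
    gen (fun b => In b K \/ im R b) a.

Section Phis.
Variables (A B I : Type) (V : I -> frel A A) (W : I -> frel B B).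

Definition phi1 (R : frel A B) : frel A B :=
  rinfi (fun i => rinv (ldiv (rcomp (W i) (rinv R)) (V i))).
Definition phi2 (R : frel A B) : frel A B :=
  rinfi (fun i => rdiv (rcomp R (W i)) (V i)).
Definition phi3 (R : frel A B) : frel A B :=
  rinfi (fun i => rmeet (rinv (ldiv (rcomp (W i) (rinv R)) (V i)))
                        (ldiv (rcomp (V i) R) (W i))).
Definition phi4 (R : frel A B) : frel A B :=
  rinfi (fun i => rmeet (rdiv (rcomp R (W i)) (V i))
                        (rinv (rdiv (rcomp (rinv R) (V i)) (W i)))).
Definition phi5 (R : frel A B) : frel A B :=
  rinfi (fun i => rmeet (rdiv (rcomp R (W i)) (V i))
                        (ldiv (rcomp (V i) R) (W i))).
Definition phi6 (R : frel A B) : frel A B :=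
  rinfi (fun i => rmeet (rinv (ldiv (rcomp (W i) (rinv R)) (V i)))
                        (rinv (rdiv (rcomp (rinv R) (V i)) (W i)))).

Definition phis : list (frel A B -> frel A B) := [phi1; phi2; phi3; phi4; phi5; phi6].
End Phis.
End Rel.

Definition finite_type (T : Type) : Prop := exists l : list T, forall x, In x l.

(* Every operator phi_t is built from R by inverses, compositions, residuals
   and meets, each of which is isotone in R (residuals are isotone in their
   numerator).  Over finite A, B and I every sup and inf involved is a finite
   join or meet, so each value of phi_t(R) is a lattice term in the values of
   R, V_i and W_i; hence K can be taken to be the finitely many values of the
   V_i and W_i. *)
From Stdlib Require Import List.

Section Lattice.
Context {L : CRL}.

Lemma meet_le_l (a b : L) : le L (meet L a b) a.
Proof. exact (proj1 (proj1 (meet_glb L a b _) (le_refl L _))). Qed.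

Lemma meet_le_r (a b : L) : le L (meet L a b) b.
Proof. exact (proj2 (proj1 (meet_glb L a b _) (le_refl L _))). Qed.

Lemma join_le_l (a b : L) : le L a (join L a b).
Proof. exact (proj1 (proj1 (join_lub L a b _) (le_refl L _))). Qed.

Lemma join_le_r (a b : L) : le L b (join L a b).
Proof. exact (proj2 (proj1 (join_lub L a b _) (le_refl L _))). Qed.

Lemma meet_mono (a b c d : L) :
  le L a b -> le L c d -> le L (meet L a c) (meet L b d).
Proof.
  intros Hab Hcd; apply meet_glb; split.
  - exact (le_trans L _ _ _ (meet_le_l a c) Hab).
  - exact (le_trans L _ _ _ (meet_le_r a c) Hcd).
Qed.

Lemma impl_modus_ponens (a c : L) : le L (otimes L (impl L c a) c) a.
Proof. apply adjoint, le_refl. Qed.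

Lemma otimes_mono_l (a b c : L) : le L a b -> le L (otimes L a c) (otimes L b c).
Proof.
  intro Hab; apply adjoint.
  exact (le_trans L _ _ _ Hab (proj1 (adjoint L b c _) (le_refl L _))).
Qed.

Lemma otimes_mono (a b c d : L) :
  le L a b -> le L c d -> le L (otimes L a c) (otimes L b d).
Proof.
  intros Hab Hcd; apply (le_trans L _ (otimes L b c)).
  - exact (otimes_mono_l _ _ c Hab).
  - rewrite (otimes_comm L b c), (otimes_comm L b d); exact (otimes_mono_l _ _ b Hcd).
Qed.

Lemma impl_mono_r (a b c : L) : le L a b -> le L (impl L c a) (impl L c b).
Proof.
  intro Hab; apply adjoint.
  exact (le_trans L _ _ _ (impl_modus_ponens a c) Hab).
Qed.

Lemma infi_lb {T : Type} (f : T -> L) (t : T) : le L (infi L f) (f t).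
Proof. apply inf_lb; exists t; reflexivity. Qed.

Lemma supi_ub {T : Type} (f : T -> L) (t : T) : le L (f t) (supi L f).
Proof. apply sup_ub; exists t; reflexivity. Qed.

Lemma infi_mono {T : Type} (f g : T -> L) :
  (forall t, le L (f t) (g t)) -> le L (infi L f) (infi L g).
Proof.
  intro Hfg; apply inf_glb; intros a [t ->].
  exact (le_trans L _ _ _ (infi_lb f t) (Hfg t)).
Qed.

Lemma supi_mono {T : Type} (f g : T -> L) :
  (forall t, le L (f t) (g t)) -> le L (supi L f) (supi L g).
Proof.
  intro Hfg; apply sup_lub; intros a [t ->].
  exact (le_trans L _ _ _ (Hfg t) (supi_ub g t)).
Qed.

Lemma infi_list {T : Type} (l : list T) (f : T -> L) : (forall t, In t l) ->
  infi L f = fold_right (fun t acc => meet L (f t) acc) (top L) l.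
Proof.
  intro Hl; apply le_antisym.
  - clear Hl; induction l as [|t l IH]; simpl.
    + apply top_greatest.
    + apply meet_glb; split; [apply infi_lb | exact IH].
  - apply inf_glb; intros a [t ->]; specialize (Hl t); clear -Hl.
    induction l as [|u l IH]; simpl in *; [contradiction |].
    destruct Hl as [-> | Hl]; [apply meet_le_l |].
    exact (le_trans L _ _ _ (meet_le_r _ _) (IH Hl)).
Qed.

Lemma supi_list {T : Type} (l : list T) (f : T -> L) : (forall t, In t l) ->
  supi L f = fold_right (fun t acc => join L (f t) acc) (bot L) l.
Proof.
  intro Hl; apply le_antisym.
  - apply sup_lub; intros a [t ->]; specialize (Hl t); clear -Hl.
    induction l as [|u l IH]; simpl in *; [contradiction |].
    destruct Hl as [-> | Hl]; [apply join_le_l |].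
    exact (le_trans L _ _ _ (IH Hl) (join_le_r _ _)).
  - clear Hl; induction l as [|t l IH]; simpl.
    + apply bot_least.
    + apply join_lub; split; [apply supi_ub | exact IH].
Qed.

Lemma gen_infi {T : Type} (M : L -> Prop) (f : T -> L) : finite_type T ->
  (forall t, gen L M (f t)) -> gen L M (infi L f).
Proof.
  intros [l Hl] Hf; rewrite (infi_list l f Hl); clear Hl.
  induction l; simpl; [apply gen_top | apply gen_meet; auto].
Qed.

Lemma gen_supi {T : Type} (M : L -> Prop) (f : T -> L) : finite_type T ->
  (forall t, gen L M (f t)) -> gen L M (supi L f).
Proof.
  intros [l Hl] Hf; rewrite (supi_list l f Hl); clear Hl.
  induction l; simpl; [apply gen_bot | apply gen_join; auto].
Qed.

End Lattice.

Section Relations.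
Context {L : CRL}.

Lemma rle_rinv {X Y : Type} (R S : frel L X Y) : rle R S -> rle (rinv R) (rinv S).
Proof. intros H y x; apply H. Qed.

Lemma rle_rcomp {X Y Z : Type} (R R' : frel L X Y) (S S' : frel L Y Z) :
  rle R R' -> rle S S' -> rle (rcomp R S) (rcomp R' S').
Proof. intros HR HS x z; apply supi_mono; intro y; apply otimes_mono; auto. Qed.

Lemma rle_rmeet {X Y : Type} (R R' S S' : frel L X Y) :
  rle R R' -> rle S S' -> rle (rmeet R S) (rmeet R' S').
Proof. intros HR HS x y; apply meet_mono; auto. Qed.

Lemma rle_rinfi {I X Y : Type} (F G : I -> frel L X Y) :
  (forall i, rle (F i) (G i)) -> rle (rinfi F) (rinfi G).
Proof. intros H x y; apply infi_mono; intro i; apply H. Qed.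

Lemma rle_rdiv {X Y : Type} (S S' : frel L X Y) (T : frel L X X) :
  rle S S' -> rle (rdiv S T) (rdiv S' T).
Proof. intros H x y; apply infi_mono; intro x'; apply impl_mono_r, H. Qed.

Lemma rle_ldiv {X Y : Type} (S S' : frel L X Y) (T : frel L Y Y) :
  rle S S' -> rle (ldiv S T) (ldiv S' T).
Proof. intros H x y; apply infi_mono; intro y'; apply impl_mono_r, H. Qed.

Lemma rle_refl {X Y : Type} (R : frel L X Y) : rle R R.
Proof. intros x y; apply le_refl. Qed.

Definition rel_in {X Y : Type} (M : L -> Prop) (R : frel L X Y) : Prop :=
  forall x y, gen L M (R x y).

Variable M : L -> Prop.

Lemma rel_in_rinv {X Y : Type} (R : frel L X Y) : rel_in M R -> rel_in M (rinv R).
Proof. intros H y x; apply H. Qed.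

Lemma rel_in_rcomp {X Y Z : Type} (R : frel L X Y) (S : frel L Y Z) :
  finite_type Y -> rel_in M R -> rel_in M S -> rel_in M (rcomp R S).
Proof. intros fY HR HS x z; apply gen_supi; auto; intro y; apply gen_otimes; auto. Qed.

Lemma rel_in_rmeet {X Y : Type} (R S : frel L X Y) :
  rel_in M R -> rel_in M S -> rel_in M (rmeet R S).
Proof. intros HR HS x y; apply gen_meet; auto. Qed.

Lemma rel_in_rinfi {I X Y : Type} (F : I -> frel L X Y) :
  finite_type I -> (forall i, rel_in M (F i)) -> rel_in M (rinfi F).
Proof. intros fI H x y; apply gen_infi; auto; intro i; apply H. Qed.

Lemma rel_in_rdiv {X Y : Type} (S : frel L X Y) (T : frel L X X) :
  finite_type X -> rel_in M S -> rel_in M T -> rel_in M (rdiv S T).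
Proof. intros fX HS HT x y; apply gen_infi; auto; intro x'; apply gen_impl; auto. Qed.

Lemma rel_in_ldiv {X Y : Type} (S : frel L X Y) (T : frel L Y Y) :
  finite_type Y -> rel_in M S -> rel_in M T -> rel_in M (ldiv S T).
Proof. intros fY HS HT x y; apply gen_infi; auto; intro y'; apply gen_impl; auto. Qed.

Lemma rel_in_im {X Y : Type} (R : frel L X Y) :
  (forall a, im R a -> M a) -> rel_in M R.
Proof. intros H x y; apply gen_base, H; exists x, y; reflexivity. Qed.

End Relations.

Section Operators.
Context {L : CRL} {A B I : Type}.
Variables (V : I -> frel L A A) (W : I -> frel L B B).

Lemma phis_isotone phi : In phi (phis V W) -> isotone phi.
Proof.
  intros Hphi R S HRS.
  assert (HRS' : rle (rinv R) (rinv S)) by (apply rle_rinv; exact HRS).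
  assert (HRW : forall i, rle (rcomp R (W i)) (rcomp S (W i)))
    by (intro i; apply rle_rcomp; [exact HRS | apply rle_refl]).
  assert (HWR : forall i, rle (rcomp (W i) (rinv R)) (rcomp (W i) (rinv S)))
    by (intro i; apply rle_rcomp; [apply rle_refl | exact HRS']).
  assert (HVR : forall i, rle (rcomp (V i) R) (rcomp (V i) S))
    by (intro i; apply rle_rcomp; [apply rle_refl | exact HRS]).
  assert (HRV : forall i, rle (rcomp (rinv R) (V i)) (rcomp (rinv S) (V i)))
    by (intro i; apply rle_rcomp; [exact HRS' | apply rle_refl]).
  simpl in Hphi; repeat destruct Hphi as [<- | Hphi]; try contradiction;
    apply rle_rinfi; intro i.
  - apply rle_rinv, rle_ldiv, HWR.
  - apply rle_rdiv, HRW.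
  - apply rle_rmeet; [apply rle_rinv, rle_ldiv, HWR | apply rle_ldiv, HVR].
  - apply rle_rmeet; [apply rle_rdiv, HRW | apply rle_rinv, rle_rdiv, HRV].
  - apply rle_rmeet; [apply rle_rdiv, HRW | apply rle_ldiv, HVR].
  - apply rle_rmeet; [apply rle_rinv, rle_ldiv, HWR | apply rle_rinv, rle_rdiv, HRV].
Qed.

Variable M : L -> Prop.
Hypotheses (fA : finite_type A) (fB : finite_type B) (fI : finite_type I).
Hypotheses (HV : forall i, rel_in M (V i)) (HW : forall i, rel_in M (W i)).

Lemma phis_rel_in phi R : In phi (phis V W) -> rel_in M R -> rel_in M (phi R).
Proof.
  intros Hphi HR.
  assert (HR' : rel_in M (rinv R)) by (apply rel_in_rinv; exact HR).
  assert (HRW : forall i, rel_in M (rdiv (rcomp R (W i)) (V i)))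
    by (intro i; apply rel_in_rdiv; [exact fA | apply rel_in_rcomp; auto | auto]).
  assert (HWR : forall i, rel_in M (rinv (ldiv (rcomp (W i) (rinv R)) (V i))))
    by (intro i; apply rel_in_rinv, rel_in_ldiv; [exact fA | apply rel_in_rcomp; auto | auto]).
  assert (HVR : forall i, rel_in M (ldiv (rcomp (V i) R) (W i)))
    by (intro i; apply rel_in_ldiv; [exact fB | apply rel_in_rcomp; auto | auto]).
  assert (HRV : forall i, rel_in M (rinv (rdiv (rcomp (rinv R) (V i)) (W i))))
    by (intro i; apply rel_in_rinv, rel_in_rdiv; [exact fB | apply rel_in_rcomp; auto | auto]).
  simpl in Hphi; repeat destruct Hphi as [<- | Hphi]; try contradiction;
    apply rel_in_rinfi; auto; intro i; try apply rel_in_rmeet; auto.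
Qed.

End Operators.

Lemma finite_family_values {L : CRL} {I X Y : Type} (F : I -> frel L X Y) :
  finite_type I -> finite_type X -> finite_type Y ->
  exists K : list L, forall i x y, In (F i x y) K.
Proof.
  intros [lI HI] [lX HX] [lY HY].
  exists (flat_map (fun i => flat_map (fun x => map (F i x) lY) lX) lI).
  intros i x y; apply in_flat_map; exists i; split; [apply HI |].
  apply in_flat_map; exists x; split; [apply HX | apply in_map, HY].
Qed.

Theorem theorem5p2 (L : CRL) (A B I : Type)
  (hA : inhabited A) (hB : inhabited B) (hI : inhabited I)
  (V : I -> frel L A A) (W : I -> frel L B B) :
  (forall phi, In phi (phis V W) -> isotone phi) /\
  (finite_type A -> finite_type B -> finite_type I ->
   forall phi, In phi (phis V W) -> image_localized phi).
Proof.
  split; [exact (phis_isotone V W) |].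
  intros fA fB fI phi Hphi.
  destruct (finite_family_values V fI fA fA) as [KV HKV].
  destruct (finite_family_values W fI fB fB) as [KW HKW].
  exists (KV ++ KW); intros R a [x [y ->]].
  apply (phis_rel_in V W (fun b => In b (KV ++ KW) \/ im R b) fA fB fI);
    [| | exact Hphi |].
  - intros i a a'; apply gen_base; left; apply in_or_app; left; apply HKV.
  - intros i b b'; apply gen_base; left; apply in_or_app; right; apply HKW.
  - apply rel_in_im; intros b Hb; right; exact Hb.
Qed.
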